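(* Let $G=(V,E)$ be an undirected graph, $f,g:V\to\mathbb{Z}$ with $f\le g$, suppose $G$ admits an $(f,g)$-bounded orientation, and let $T\subseteq V$. Then there exist functions $f',g':V\to\mathbb{Z}$ with $f\le f'\le g'\le g$ and a subset $X_T\subseteq V$ such that an $(f,g)$-bounded orientation $D$ of $G$ minimizes the in-degree $\varrho_D(T)$ of $T$ (among all $(f,g)$-bounded orientations of $G$) if and only if $D$ is an $(f',g')$-bounded orientation with $\varrho_D(X_T)=0$.
   Context: $\varrho_D(v)$ is the number of arcs with head $v$; $\varrho_D(X)$ is the number of arcs with head in $X$ and tail in $V-X$. An orientation is $(f,g)$-bounded if $f(v)\le\varrho_D(v)\le g(v)$ for all $v\in V$. *)

From mathcomp Require Import all_boot all_order all_algebra.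
Set Implicit Arguments. Unset Strict Implicit. Unset Printing Implicit Defensive.
Import Order.TTheory GRing.Theory Num.Theory.

(* An undirected (multi)graph G = (V, E): V and E finite types, each edge e
   has two (unordered) endpoints given by [ends e] (the order of the pair is
   only a naming convention).  Loops and parallel edges are allowed.
   An orientation D of G is a function [D : E -> bool]: if [D e] is true,
   e is oriented from (ends e).1 to (ends e).2, otherwise the reverse. *)

Section Orient.
Variables (V E : finType) (ends : E -> V * V).

Definition orientation := E -> bool.

Definition head (D : orientation) (e : E) : V :=
  if D e then (ends e).2 else (ends e).1.
Definition tail (D : orientation) (e : E) : V :=
  if D e then (ends e).1 else (ends e).2.

Definition indeg (D : orientation) (v : V) : nat :=
  #|[set e : E | head D e == v]|.

Definition indegS (D : orientation) (X : {set V}) : nat :=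
  #|[set e : E | (head D e \in X) && (tail D e \notin X)]|.

Definition bounded (f g : V -> int) (D : orientation) : Prop :=
  forall v, (f v <= (indeg D v)%:Z <= g v)%R.
End Orient.

(* Fix an (f,g)-bounded orientation D0 minimizing rho(T) and let X be the set
   of vertices from which D0 has a directed path to some t in T with
   rho_D0(t) > f(t).  No arc enters X; every v in X \ T has rho_D0(v) = g(v),
   since otherwise reversing a path from v to such a t would keep the
   orientation (f,g)-bounded and decrease rho(T); every v in T \ X has
   rho_D0(v) = f(v) by the choice of X.  Counting arcs, every orientation D
   satisfies
     rho_D(T) = c + rho_D(X) + sum_{X \ T} (g - rho_D) + sum_{T \ X} (rho_D - f)
   with c independent of D.  For (f,g)-bounded D the last three terms are
   nonnegative and vanish for D0, so D is optimal iff they vanish, i.e. iff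
   rho_D(X) = 0 and D is (f',g')-bounded, where f' = g on X \ T, g' = f on
   T \ X, and f' = f, g' = g elsewhere. *)

From Pilot Require Import Defs.
From mathcomp Require Import all_boot all_order all_algebra.
From mathcomp Require Import zify.
From Stdlib Require Import Classical.
Import Order.TTheory GRing.Theory Num.Theory.
Set Implicit Arguments. Unset Strict Implicit.

Lemma ex_minimizer (A : Type) (P : A -> Prop) (F : A -> nat) :
  (exists a, P a) -> exists2 a, P a & forall b, P b -> F a <= F b.
Proof.
move=> [a Pa]; apply: NNPP => no_min.
suff lbF n : forall b, P b -> n <= F b by have := lbF (F a).+1 a Pa; rewrite ltnn.
elim: n => [//|n IHn] b Pb; rewrite ltnNge; apply/negP => Fb_le.
by apply: no_min; exists b => // c Pc; apply: leq_trans Fb_le (IHn c Pc).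
Qed.

Section Orientations.
Variables (V E : finType) (ends : E -> V * V).
Implicit Types (D : orientation E) (X T Z : {set V}).

Local Notation head := (Defs.head ends).
Local Notation tail := (Defs.tail ends).
Local Notation indeg := (Defs.indeg ends).
Local Notation indegS := (Defs.indegS ends).

Lemma card_set_sum (P : pred E) : #|[set e | P e]| = \sum_e P e.
Proof. by rewrite -sum1dep_card big_mkcond /=; apply: eq_bigr => e _; case: (P e). Qed.

Lemma sum_eq_mem X x : \sum_(v in X) (x == v) = (x \in X).
Proof.
have [xX | xNX] := boolP (x \in X).
  rewrite (bigD1 x) //= eqxx big1 // => v /andP[_ vNx].
  by rewrite eq_sym (negbTE vNx).
by rewrite big1 // => v vX; apply/eqP; rewrite eqb0; apply: contraNN xNX => /eqP->.
Qed.

Definition inner_edges X := #|[set e | ((ends e).1 \in X) && ((ends e).2 \in X)]|.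

Lemma sum_indeg D X : \sum_(v in X) indeg D v = indegS D X + inner_edges X.
Proof.
rewrite /Defs.indeg /indegS /inner_edges !card_set_sum.
under eq_bigr do rewrite card_set_sum.
rewrite exchange_big -big_split /=; apply: eq_bigr => e _.
rewrite /Defs.head /Defs.tail; case: (D e); rewrite sum_eq_mem;
  by case: ((ends e).1 \in X); case: ((ends e).2 \in X).
Qed.

Definition flip D e0 : orientation E :=
  fun e => if e == e0 then ~~ D e else D e.

Lemma indeg_flip D e0 w :
  indeg (flip D e0) w + (head D e0 == w) = indeg D w + (tail D e0 == w).
Proof.
rewrite /Defs.indeg !card_set_sum (bigD1 e0) //= [in RHS](bigD1 e0) //=.
have -> : head (flip D e0) e0 = tail D e0.
  by rewrite /Defs.head /Defs.tail /flip eqxx; case: (D e0).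
rewrite (eq_bigr (fun e => (head D e == w) : nat)); last first.
  by move=> e /negbTE e_ne; rewrite /Defs.head /flip e_ne.
lia.
Qed.

Definition arc D : rel V :=
  fun x y => [exists e, (tail D e == x) && (head D e == y)].

Lemma reverse_path D u p : path (arc D) u p -> uniq (u :: p) ->
  exists D', forall w, indeg D' w + (last u p == w) = indeg D w + (u == w).
Proof.
elim: p D u => [|w1 p IHp] D u /=; first by exists D.
move=> /andP[/existsP[e /andP[/eqP te /eqP he]] pth] /andP[uNp uniq_p].
have pth1 : path (arc (flip D e)) w1 p.
  apply: (sub_in_path (P := mem (w1 :: p))) pth; last exact/allP.
  move=> x y xp _ /existsP[e' /andP[/eqP te' /eqP he']].
  have e'_ne : e' != e.
    by apply: contraNneq uNp => e'e; rewrite -te -e'e te'.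
  apply/existsP; exists e'; rewrite -te' -he'.
  by rewrite /Defs.head /Defs.tail /flip (negbTE e'_ne) !eqxx.
have [D' HD'] := IHp _ _ pth1 uniq_p.
exists D' => w; have := HD' w; have := indeg_flip D e w; rewrite he te; lia.
Qed.

Lemma reverse_connect D u v : connect (arc D) u v ->
  exists D', forall w, indeg D' w + (v == w) = indeg D w + (u == w).
Proof.
move=> /connectP[p pth ->]; case: (shortenP pth) => p' pth' uniq_p' _.
exact: reverse_path pth' uniq_p'.
Qed.

Definition ancestors D Z := [set v | [exists z in Z, connect (arc D) v z]].

Lemma indegS_ancestors D Z : indegS D (ancestors D Z) = 0.
Proof.
apply/eqP; rewrite cards_eq0; apply/eqP/setP => e; rewrite !inE.
apply/negP => /andP[/existsP[z /andP[zZ hz]] /existsP[]]; exists z.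
rewrite zZ (connect_trans _ hz) //; apply: connect1.
by apply/existsP; exists e; rewrite !eqxx.
Qed.

Section Slack.
Local Open Scope ring_scope.
Variables (f g : V -> int) (X T : {set V}).

Definition tight_lo v := if (v \in X) && (v \notin T) then g v else f v.
Definition tight_hi v := if (v \in T) && (v \notin X) then f v else g v.

Lemma tight_bounds : (forall v, f v <= g v) ->
  forall v, f v <= tight_lo v /\ tight_lo v <= tight_hi v /\ tight_hi v <= g v.
Proof.
move=> fg v; rewrite /tight_lo /tight_hi.
by case: (v \in X); case: (v \in T); rewrite /= ?lexx ?fg.
Qed.

Definition slack D : int :=
  (indegS D X)%:Z + \sum_(v in X :\: T) (g v - (indeg D v)%:Z)
  + \sum_(v in T :\: X) ((indeg D v)%:Z - f v).

Lemma indegS_slack D : (indegS D T)%:Z =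
  (inner_edges X)%:Z - (inner_edges T)%:Z
  - \sum_(v in X :\: T) g v + \sum_(v in T :\: X) f v + slack D.
Proof.
have sT := sum_indeg D T; have sX := sum_indeg D X.
rewrite (big_setID X) /= in sT; rewrite (big_setID T) /= setIC in sX.
move/(congr1 Posz): sT; move/(congr1 Posz): sX.
rewrite /slack !sumrB !PoszD !(big_morph Posz PoszD (erefl : Posz 0 = 0)).
set sg := \sum_(v in X :\: T) g v; set sf := \sum_(v in T :\: X) f v.
set dXT := \sum_(v in X :\: T) (indeg D v)%:Z.
set dTX := \sum_(v in T :\: X) (indeg D v)%:Z.
lia.
Qed.

Lemma slack_ge0 D : bounded ends f g D -> 0 <= slack D.
Proof.
move=> bD; rewrite !addr_ge0 ?sumr_ge0 // => v _; rewrite subr_ge0.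
  by case/andP: (bD v).
by case/andP: (bD v).
Qed.

Lemma bounded_tight D : bounded ends f g D ->
  bounded ends tight_lo tight_hi D <->
  {in X :\: T, forall v, (indeg D v)%:Z = g v} /\
  {in T :\: X, forall v, (indeg D v)%:Z = f v}.
Proof.
move=> bD; split=> [tD | [eXT eTX] v].
  split=> v; rewrite inE => /andP[vNT vX]; apply/eqP;
    have /andP[lo hi] := bD v; have /andP[tlo thi] := tD v; rewrite eq_le.
    by rewrite hi; move: tlo; rewrite /tight_lo vX vNT.
  by rewrite lo andbT; move: thi; rewrite /tight_hi vX vNT.
have /andP[lo hi] := bD v; rewrite /tight_lo /tight_hi.
case vX: (v \in X); case vT: (v \in T); rewrite /= ?lo ?hi //.
  by rewrite eXT ?inE ?vX ?vT // lexx.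
by rewrite eTX ?inE ?vX ?vT // lexx.
Qed.

Lemma slack_eq0 D : bounded ends f g D ->
  slack D = 0 <-> bounded ends tight_lo tight_hi D /\ indegS D X = 0%N.
Proof.
move=> bD; rewrite bounded_tight //.
have geXT v : v \in X :\: T -> 0 <= g v - (indeg D v)%:Z.
  by move=> _; rewrite subr_ge0; case/andP: (bD v).
have geTX v : v \in T :\: X -> 0 <= (indeg D v)%:Z - f v.
  by move=> _; rewrite subr_ge0; case/andP: (bD v).
rewrite /slack; split=> [/eqP | [[eXT eTX] ->]].
  rewrite !paddr_eq0 ?addr_ge0 ?sumr_ge0 // => /andP[/andP[/eqP[dX] /eqP sXT] /eqP sTX].
  split=> //; split=> v /[dup] vin.
    by move/(psumr_eq0P geXT sXT)/eqP; rewrite subr_eq0 => /eqP.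
  by move/(psumr_eq0P geTX sTX)/eqP; rewrite subr_eq0 => /eqP.
rewrite !big1 // => v vin; first by rewrite eTX // subrr.
by rewrite eXT // subrr.
Qed.

End Slack.
End Orientations.

Section MinIndegS.
Variables (V E : finType) (ends : E -> V * V).
Variables (f g : V -> int) (T : {set V}) (D0 : orientation E).
Hypothesis bD0 : bounded ends f g D0.
Hypothesis minD0 :
  forall D, bounded ends f g D -> indegS ends D0 T <= indegS ends D T.

Local Notation indeg := (Defs.indeg ends).

Let X := ancestors ends D0 [set t in T | (f t < Posz (indeg D0 t))%R].

Lemma ancestor_indeg_max : {in X :\: T, forall v, Posz (indeg D0 v) = g v}.
Proof.
move=> v; rewrite !inE => /andP[vNT /existsP[t /andP[]]].
rewrite inE => /andP[tT ft] /reverse_connect[D' indegD'].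
have vt : v != t by apply: contraNneq vNT => ->.
have /andP[lo hi] := bD0 v; apply/eqP; rewrite eq_le hi /= leNgt; apply/negP => lt_g.
have bD' : bounded ends f g D'.
  move=> w; have := indegD' w; have /andP[lo' hi'] := bD0 w.
  case: (eqVneq v w) => [vw | vw]; first by subst w; rewrite eq_sym (negbTE vt); lia.
  by case: (eqVneq t w) => [tw | tw]; [subst w|]; lia.
have := minD0 bD'.
have := sum_indeg ends D' T; have := sum_indeg ends D0 T.
have : \sum_(w in T) (indeg D' w + (t == w)) = \sum_(w in T) (indeg D0 w + (v == w)).
  by apply: eq_bigr => w _; exact: indegD'.
rewrite !big_split /= !sum_eq_mem tT (negbTE vNT); lia.
Qed.

Lemma min_indegS_slack0 : slack ends f g X T D0 = 0%R.
Proof.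
apply/(slack_eq0 X T bD0); split; last exact: indegS_ancestors.
apply/bounded_tight => //; split; first exact: ancestor_indeg_max.
move=> v; rewrite inE => /andP[vNX vT]; have /andP[lo _] := bD0 v.
apply/eqP; rewrite eq_le lo andbT leNgt; apply: contra vNX => lt_f.
by rewrite inE; apply/existsP; exists v; rewrite inE vT lt_f connect0.
Qed.

End MinIndegS.

Theorem corollary5p12 (V E : finType) (ends : E -> V * V) (f g : V -> int)
  (hfg : forall v, (f v <= g v)%R)
  (hex : exists D : orientation E, bounded ends f g D)
  (T : {set V}) :
  exists (f' g' : V -> int) (XT : {set V}),
    (forall v, (f v <= f' v)%R /\ (f' v <= g' v)%R /\ (g' v <= g v)%R) /\
    forall D : orientation E, bounded ends f g D ->
      ((forall D' : orientation E, bounded ends f g D' ->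
          indegS ends D T <= indegS ends D' T)
       <-> (bounded ends f' g' D /\ indegS ends D XT = 0)).
Proof.
have [D0 bD0 minD0] := ex_minimizer (fun D => indegS ends D T) hex.
set X := ancestors ends D0 [set t in T | (f t < Posz (indeg ends D0 t))%R].
exists (tight_lo f g X T), (tight_hi f g X T), X.
split; first exact: tight_bounds.
move=> D bD; rewrite -slack_eq0 //.
have slack0 : slack ends f g X T D0 = 0%R := min_indegS_slack0 bD0 minD0.
have e0 := indegS_slack ends f g X T D0; have e := indegS_slack ends f g X T D.
rewrite slack0 in e0; split=> [minD | slackD D' bD'].
  by have := slack_ge0 X T bD; have := minD D0 bD0; lia.
by rewrite slackD in e; have := minD0 D' bD'; lia.
Qed.
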